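(* Let $\mathbb K$ be $\mathbb R$ or $\mathbb C$, let $A=A_0\oplus A_1$ be a commutative associative superalgebra over $\mathbb K$ (so $xy=(-1)^{|x||y|}yx$ for homogeneous $x,y$), and let $\delta:A\to A$ be an odd derivation of $A$, i.e. $\delta$ is linear, $|\delta(x)|=|x|+1$ and $\delta(xy)=\delta(x)y+(-1)^{|x|}x\,\delta(y)$ for homogeneous $x,y\in A$. Let $\mathfrak D^\delta=\{x\cdot\delta : x\in A\}$, where $x\cdot\delta$ is the map $y\mapsto x\,\delta(y)$; it is a super vector space with $|x\cdot\delta|=|x|+1$, so $\mathfrak D^\delta_0=\{x\cdot\delta: x\in A_1\}$ and $\mathfrak D^\delta_1=\{x\cdot\delta : x\in A_0\}$, and it is a left $A$-supermodule via $z\cdot(x\cdot\delta)=(zx)\cdot\delta$. Define the bilinear bracket on $\mathfrak D^\delta$ by $$\{X,Y\}=\big(x\,\delta(y)+(-1)^{(|x|+1)(|y|+1)}\,y\,\delta(x)\big)\cdot\delta,\qquad X=x\cdot\delta,\ Y=y\cdot\delta,$$ for homogeneous $x,y$, extended bilinearly. Then: (1) $(\mathfrak D^\delta_0,\{\,,\,\})$ is a Jordan algebra, i.e. the bracket is commutative on $\mathfrak D^\delta_0$ and $\{\{X,X\},\{Y,X\}\}=\{\{\{X,X\},Y\},X\}$ for all $X,Y\in\mathfrak D^\delta_0$. (2) If moreover $\delta^2=0$, then the bracket makes $\mathfrak D^\delta_1$ a Jordan module over $\mathfrak D^\delta_0$: for $X\in\mathfrak D^\delta_0$, $Y\in\mathfrak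 D^\delta_1$ one has $\{X,Y\}=\{Y,X\}$, and $\mathfrak D^\delta_0\oplus\mathfrak D^\delta_1$ with the product $(X_0,X_1).(Y_0,Y_1)=(\{X_0,Y_0\},\{X_0,Y_1\}+\{X_1,Y_0\})$ is a Jordan algebra. (3) For all homogeneous $z\in A$ and homogeneous $X,Y\in\mathfrak D^\delta$, $$2\,z\cdot\{X,Y\}=\{z\cdot X,Y\}+(-1)^{|z||X|}\{X,z\cdot Y\}.$$
   Context: A Jordan algebra is a commutative (not necessarily associative) algebra $(J,\circ)$ satisfying $(x\circ x)\circ(y\circ x)=((x\circ x)\circ y)\circ x$ for all $x,y\in J$. Parities $|\cdot|$ are taken in $\mathbb Z_2$ and all identities are stated for homogeneous elements. *)

From mathcomp Require Import all_boot all_algebra.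
From mathcomp Require Import complex.
From mathcomp Require Import Rstruct.
From Stdlib Require Import Reals.

Set Implicit Arguments.
Unset Strict Implicit.
Unset Printing Implicit Defensive.

Import GRing.Theory.
Local Open Scope ring_scope.

Section SuperDefs.
Variable K : fieldType.
Variable A : lmodType K.

(* A Z/2-grading A = A_0 (+) A_1 given by the two projections pi false, pi true. *)
Definition grading (pi : bool -> A -> A) : Prop :=
  [/\ (forall b (a : K) (x y : A), pi b (a *: x + y) = a *: pi b x + pi b y),
      (forall x, pi false x + pi true x = x) &
      (forall b c x, pi b (pi c x) = if b == c then pi c x else 0)].

(* x is homogeneous of parity b (false = even, true = odd). *)
Definition homog (pi : bool -> A -> A) (b : bool) (x : A) : Prop := pi b x = x.

Definition sgn (b : bool) : K := if b then -1 else 1.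

Definition comm_assoc_superalgebra (pi : bool -> A -> A) (mul : A -> A -> A) : Prop :=
  grading pi /\
  [/\ (forall (a : K) x y z, mul (a *: x + y) z = a *: mul x z + mul y z),
      (forall (a : K) x y z, mul z (a *: x + y) = a *: mul z x + mul z y),
      (forall b c x y, homog pi b x -> homog pi c y -> homog pi (b (+) c) (mul x y)),
      (forall x y z, mul x (mul y z) = mul (mul x y) z) &
      (forall b c x y, homog pi b x -> homog pi c y ->
                       mul x y = sgn (b && c) *: mul y x)].

Definition odd_derivation (pi : bool -> A -> A) (mul : A -> A -> A)
    (delta : A -> A) : Prop :=
  [/\ (forall (a : K) x y, delta (a *: x + y) = a *: delta x + delta y),
      (forall b x, homog pi b x -> homog pi (~~ b) (delta x)) &
      (forall b c x y, homog pi b x -> homog pi c y ->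
         delta (mul x y) = mul (delta x) y + sgn b *: mul x (delta y))].

Definition Dop (mul : A -> A -> A) (delta : A -> A) (x : A) : A -> A :=
  fun y => mul x (delta y).

(* Representative of {x.delta, y.delta} for x of parity b and y of parity c:
   x delta(y) + (-1)^{(|x|+1)(|y|+1)} y delta(x). *)
Definition br (mul : A -> A -> A) (delta : A -> A) (b c : bool) (x y : A) : A :=
  mul x (delta y) + sgn (~~ b && ~~ c) *: mul y (delta x).

(* Product on D_0 (+) D_1, on pairs of representatives (x0, x1) with
   x0 odd (so x0.delta in D_0) and x1 even (so x1.delta in D_1):
   (X0,X1).(Y0,Y1) = ({X0,Y0}, {X0,Y1} + {X1,Y0}). *)
Definition pmul (mul : A -> A -> A) (delta : A -> A) (X Y : A * A) : A * A :=
  (br mul delta true true X.1 Y.1,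
   br mul delta true false X.1 Y.2 + br mul delta false true X.2 Y.1).

Definition Deq (mul : A -> A -> A) (delta : A -> A) (X Y : A * A) : Prop :=
  Dop mul delta X.1 = Dop mul delta Y.1 /\ Dop mul delta X.2 = Dop mul delta Y.2.

End SuperDefs.

Definition theorem5_for (K : fieldType) : Prop :=
  forall (A : lmodType K) (pi : bool -> A -> A) (mul : A -> A -> A) (delta : A -> A),
  comm_assoc_superalgebra pi mul ->
  odd_derivation pi mul delta ->
  let D := Dop mul delta in
  let brk := br mul delta in
  (forall x y, homog pi true x -> homog pi true y ->
     D (brk true true x y) = D (brk true true y x) /\
     D (brk true true (brk true true x x) (brk true true y x)) =
     D (brk true true (brk true true (brk true true x x) y) x))
  /\
  ((forall x, delta (delta x) = 0) ->
     (forall x y, homog pi true x -> homog pi false y ->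
        D (brk true false x y) = D (brk false true y x))
     /\
     (forall X Y : A * A,
        homog pi true X.1 -> homog pi false X.2 ->
        homog pi true Y.1 -> homog pi false Y.2 ->
        Deq mul delta (pmul mul delta X Y) (pmul mul delta Y X) /\
        Deq mul delta
          (pmul mul delta (pmul mul delta X X) (pmul mul delta Y X))
          (pmul mul delta (pmul mul delta (pmul mul delta X X) Y) X)))
  /\
  (* (3) 2 z.{X,Y} = {z.X, Y} + (-1)^{|z||X|} {X, z.Y}, with |X| = |x|+1 *)
  (forall (bz b c : bool) (z x y : A),
     homog pi bz z -> homog pi b x -> homog pi c y ->
     D (2%:R *: mul z (brk b c x y)) =
     D (brk (bz (+) b) c (mul z x) y
        + sgn K (bz && ~~ b) *: brk b (bz (+) c) x (mul z y))).

(* All three statements hold already for the representatives in A, and each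
   is an identity between differential polynomials in finitely many
   homogeneous variables: it follows from bilinearity, associativity,
   supercommutativity (with x x = 0 for odd x, as 2 is invertible), the
   graded Leibniz rule and, in (2), delta^2 = 0.  Such identities are decided
   by reflection: both sides are expanded into signed monomials in the atoms
   delta^k x_i, each monomial is sorted with the Koszul sign, and the
   difference is checked to have only zero coefficients. *)

From mathcomp Require Import all_boot all_algebra.
From mathcomp Require Import complex.
From mathcomp Require Import Rstruct.

Set Implicit Arguments.
Unset Strict Implicit.
Unset Printing Implicit Defensive.

Import GRing.Theory Num.Theory.
Local Open Scope ring_scope.

Lemma linear_fun0 (R : pzRingType) (U V : lmodType R) (f : U -> V) :
  linear f -> f 0 = 0.
Proof. by move=> /zmod_morphism_linear fB; have := fB 0 0; rewrite !subrr. Qed.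

Inductive sterm :=
  | SVar of nat
  | SAdd of sterm & sterm
  | SOpp of sterm
  | SScale of int & sterm
  | SMul of sterm & sterm
  | SDer of sterm.

(* The atom (i, k) stands for delta^k x_i; a monomial (a, l) for the
   right-nested product a (l_1 (... l_n)). *)
Definition atom := (nat * nat)%type.
Definition monom := (atom * seq atom)%type.
Definition spoly := seq (int * monom).

Definition signz (b : bool) : int := if b then -1 else 1.

Section Normalization.

Variable par : seq bool.

Definition atom_parity (a : atom) := nth false par a.1 (+) odd a.2.

Definition atom_le (a h : atom) := (a.1 < h.1)%N || (a.1 == h.1) && (a.2 <= h.2)%N.

Definition monom_cat (m1 m2 : monom) : monom := (m1.1, m1.2 ++ m2.1 :: m2.2).

Definition spoly_scale (c : int) (p : spoly) : spoly :=
  [seq (c * d.1, d.2) | d <- p].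

Definition spoly_mul (p q : spoly) : spoly :=
  [seq (c.1 * d.1, monom_cat c.2 d.2) | c <- p, d <- q].

Definition spoly_lmul_atom (s : int) (a : atom) (p : spoly) : spoly :=
  [seq (d.1 * s, (a, d.2.1 :: d.2.2)) | d <- p].

Fixpoint monom_der (a : atom) (l : seq atom) : spoly :=
  match l with
  | [::] => [:: (1, ((a.1, a.2.+1), [::]))]
  | b :: l' => (1, ((a.1, a.2.+1), l))
                 :: spoly_lmul_atom (signz (atom_parity a)) a (monom_der b l')
  end.

Fixpoint spoly_der (p : spoly) : spoly :=
  if p is (c, (a, l)) :: p' then spoly_scale c (monom_der a l) ++ spoly_der p'
  else [::].

Fixpoint spoly_of (t : sterm) : spoly :=
  match t with
  | SVar i => [:: (1, ((i, 0%N), [::]))]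
  | SAdd u v => spoly_of u ++ spoly_of v
  | SOpp u => spoly_scale (-1) (spoly_of u)
  | SScale z u => spoly_scale z (spoly_of u)
  | SMul u v => spoly_mul (spoly_of u) (spoly_of v)
  | SDer u => spoly_der (spoly_of u)
  end.

(* [atom_insert a h t] is the signed sorted form of the product a (h t), for
   (h, t) sorted; the coefficient 0 accounts for the square of an odd atom. *)
Fixpoint atom_insert (a h : atom) (t : seq atom) : int * monom :=
  if (a == h) && atom_parity a then (0, (h, t)) else
  if atom_le a h then (1, (a, h :: t)) else
  let s := signz (atom_parity a && atom_parity h) in
  match t with
  | [::] => (s, (h, [:: a]))
  | c :: t' => let r := atom_insert a c t' in (s * r.1, (h, r.2.1 :: r.2.2))
  end.

Fixpoint monom_sort (a : atom) (l : seq atom) : int * monom :=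
  if l is b :: l' then
    let r := monom_sort b l' in
    let r' := atom_insert a r.2.1 r.2.2 in (r.1 * r'.1, r'.2)
  else (1, (a, [::])).

(* With [nil2] set (the case delta^2 = 0), monomials containing an atom
   delta^k x_i with k >= 2 are dropped as well. *)
Definition spoly_sort (nil2 : bool) (p : spoly) : spoly :=
  foldr (fun cm acc =>
    let r := monom_sort cm.2.1 cm.2.2 in
    if (r.1 == 0) || nil2 && has (fun a => (2 <= a.2)%N) (r.2.1 :: r.2.2)
    then acc else (cm.1 * r.1, r.2) :: acc) [::] p.

Fixpoint spoly_add_term (cm : int * monom) (p : spoly) : spoly :=
  if p is dm :: p' then
    if cm.2 == dm.2 then (cm.1 + dm.1, dm.2) :: p' else dm :: spoly_add_term cm p'
  else [:: cm].

Definition spoly_collect (p : spoly) : spoly := foldr spoly_add_term [::] p.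

Definition sterm_eqb (nil2 : bool) (t1 t2 : sterm) : bool :=
  all (fun cm => cm.1 == 0) (spoly_collect
    (spoly_sort nil2 (spoly_of t1 ++ spoly_scale (-1) (spoly_of t2)))).

End Normalization.

Section Soundness.

Variables (K : fieldType) (A : lmodType K).
Variables (pi : bool -> A -> A) (mul : A -> A -> A) (delta : A -> A).
Hypothesis superA : comm_assoc_superalgebra pi mul.
Hypothesis delta_der : odd_derivation pi mul delta.

Lemma smul_linearl z : linear (mul^~ z).
Proof. by case: superA => _ [mulD _ _ _ _] a x y; apply: mulD. Qed.

Lemma smul_linearr z : linear (mul z).
Proof. by case: superA => _ [_ mulD _ _ _] a x y; apply: mulD. Qed.

Lemma delta_linear : linear delta.
Proof. by case: delta_der. Qed.

Lemma smul0l z : mul 0 z = 0.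
Proof. exact: linear_fun0 (smul_linearl z). Qed.

Lemma smul0r z : mul z 0 = 0.
Proof. exact: linear_fun0 (smul_linearr z). Qed.

Lemma smulDl x y z : mul (x + y) z = mul x z + mul y z.
Proof. exact: (GRing.semilinear_linear (smul_linearl z)).2. Qed.

Lemma smulDr x y z : mul z (x + y) = mul z x + mul z y.
Proof. exact: (GRing.semilinear_linear (smul_linearr z)).2. Qed.

Lemma smulZl a x z : mul (a *: x) z = a *: mul x z.
Proof. exact: (scalable_linear (smul_linearl z) a x). Qed.

Lemma smulZr a x z : mul z (a *: x) = a *: mul z x.
Proof. exact: (scalable_linear (smul_linearr z) a x). Qed.

Lemma smulA x y z : mul x (mul y z) = mul (mul x y) z.
Proof. by case: superA => _ [_ _ _ mulA _]. Qed.

Lemma smulC b c x y : homog pi b x -> homog pi c y ->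
  mul x y = sgn K (b && c) *: mul y x.
Proof. by case: superA => _ [_ _ _ _ mulC]; apply: mulC. Qed.

Lemma smul_homog b c x y : homog pi b x -> homog pi c y ->
  homog pi (b (+) c) (mul x y).
Proof. by case: superA => _ [_ _ homogM _ _]; apply: homogM. Qed.

Lemma smulCA b c x y z : homog pi b x -> homog pi c y ->
  mul x (mul y z) = sgn K (b && c) *: mul y (mul x z).
Proof. by move=> hx hy; rewrite !smulA (smulC hx hy) smulZl. Qed.

Lemma delta0 : delta 0 = 0.
Proof. exact: linear_fun0 delta_linear. Qed.

Lemma deltaD x y : delta (x + y) = delta x + delta y.
Proof. exact: (GRing.semilinear_linear delta_linear).2. Qed.

Lemma deltaZ a x : delta (a *: x) = a *: delta x.
Proof. exact: (scalable_linear delta_linear a x). Qed.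

Lemma delta_homog b x : homog pi b x -> homog pi (~~ b) (delta x).
Proof. by case: delta_der => _ homog_der _; apply: homog_der. Qed.

Lemma deltaM b c x y : homog pi b x -> homog pi c y ->
  delta (mul x y) = mul (delta x) y + sgn K b *: mul x (delta y).
Proof. by case: delta_der => _ _ leibniz; apply: leibniz. Qed.

Lemma smul_odd_sqr x : (2%:R : K) != 0 -> homog pi true x -> mul x x = 0.
Proof.
move=> two_neq0 hx; have /= := smulC hx hx; rewrite scaleN1r => /eqP.
by rewrite -subr_eq0 opprK -mulr2n -scaler_nat scaler_eq0 (negbTE two_neq0) => /eqP.
Qed.

Variables (env : seq A) (par : seq bool).
Hypothesis env_homog : forall i, homog pi (nth false par i) (nth 0 env i).

Definition eval_atom (a : atom) := iter a.2 delta (nth 0 env a.1).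

Fixpoint eval_prod (a : atom) (l : seq atom) : A :=
  if l is b :: l' then mul (eval_atom a) (eval_prod b l') else eval_atom a.

Definition eval_monom (m : monom) := eval_prod m.1 m.2.

Fixpoint eval_spoly (p : spoly) : A :=
  if p is cm :: p' then cm.1%:~R *: eval_monom cm.2 + eval_spoly p' else 0.

Fixpoint eval_sterm (t : sterm) : A :=
  match t with
  | SVar i => nth 0 env i
  | SAdd u v => eval_sterm u + eval_sterm v
  | SOpp u => - eval_sterm u
  | SScale z u => z%:~R *: eval_sterm u
  | SMul u v => mul (eval_sterm u) (eval_sterm v)
  | SDer u => delta (eval_sterm u)
  end.

Fixpoint prod_parity (a : atom) (l : seq atom) : bool :=
  if l is b :: l' then atom_parity par a (+) prod_parity b l' else atom_parity par a.

Lemma signzE b : (signz b)%:~R = sgn K b.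
Proof. by case: b. Qed.

Lemma eval_atom_homog a : homog pi (atom_parity par a) (eval_atom a).
Proof.
case: a => i k; rewrite /atom_parity /eval_atom /=.
elim: k => [|k IHk] /=; first by rewrite addbF.
by rewrite addbN; apply: delta_homog.
Qed.

Lemma eval_prod_homog a l : homog pi (prod_parity a l) (eval_prod a l).
Proof.
elim: l a => [|b l IHl] a /=; first exact: eval_atom_homog.
exact: smul_homog (eval_atom_homog a) (IHl b).
Qed.

Lemma eval_spoly_cat p q : eval_spoly (p ++ q) = eval_spoly p + eval_spoly q.
Proof. by elim: p => [|cm p IHp] /=; rewrite ?add0r // IHp addrA. Qed.

Lemma eval_spoly_scale c p : eval_spoly (spoly_scale c p) = c%:~R *: eval_spoly p.
Proof.
elim: p => [|cm p IHp] /=; first by rewrite scaler0.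
by rewrite IHp scalerDr intrM scalerA.
Qed.

Lemma eval_prod_cat a l b l' :
  eval_prod a (l ++ b :: l') = mul (eval_prod a l) (eval_prod b l').
Proof. by elim: l a => [|c l IHl] a //=; rewrite IHl smulA. Qed.

Lemma eval_spoly_mul p q :
  eval_spoly (spoly_mul p q) = mul (eval_spoly p) (eval_spoly q).
Proof.
elim: p => [|c p IHp] /=; first by rewrite smul0l.
rewrite eval_spoly_cat IHp smulDl; congr (_ + _).
elim: q {IHp} => [|d q IHq] /=; first by rewrite smul0r.
rewrite IHq smulDr /eval_monom /monom_cat /= eval_prod_cat.
by rewrite !smulZl !smulZr scalerA intrM.
Qed.

Lemma eval_spoly_lmul_atom s a p :
  eval_spoly (spoly_lmul_atom s a p) = s%:~R *: mul (eval_atom a) (eval_spoly p).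
Proof.
elim: p => [|d p IHp] /=; first by rewrite smul0r scaler0.
by rewrite IHp smulDr scalerDr smulZr scalerA intrM mulrC.
Qed.

Lemma eval_monom_der a l : eval_spoly (monom_der par a l) = delta (eval_prod a l).
Proof.
elim: l a => [|b l IHl] a /=; first by rewrite scale1r addr0.
rewrite scale1r eval_spoly_lmul_atom IHl signzE.
by rewrite (deltaM (eval_atom_homog a) (eval_prod_homog b l)).
Qed.

Lemma eval_spoly_der p : eval_spoly (spoly_der par p) = delta (eval_spoly p).
Proof.
elim: p => [|[c [a l]] p IHp] /=; first by rewrite delta0.
by rewrite eval_spoly_cat eval_spoly_scale eval_monom_der IHp deltaD deltaZ.
Qed.

Lemma eval_spoly_of t : eval_spoly (spoly_of par t) = eval_sterm t.
Proof.
elim: t => [i|u IHu v IHv|u IHu|z u IHu|u IHu v IHv|u IHu] /=.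
- by rewrite scale1r addr0.
- by rewrite eval_spoly_cat IHu IHv.
- by rewrite eval_spoly_scale IHu scaleN1r.
- by rewrite eval_spoly_scale IHu.
- by rewrite eval_spoly_mul IHu IHv.
- by rewrite eval_spoly_der IHu.
Qed.

Section SortSoundness.

Hypothesis two_neq0 : (2%:R : K) != 0.

Lemma eval_atom_insert a h t :
  let r := atom_insert par a h t in
  r.1%:~R *: eval_monom r.2 = mul (eval_atom a) (eval_prod h t).
Proof.
have ha := eval_atom_homog a; have hh := eval_atom_homog h.
elim: t h hh => [|c t IHt] h hh /=; case: ifP => [/andP[/eqP <- odd_a]|_].
- by rewrite scale0r smul_odd_sqr // -odd_a.
- case: ifP => _; first by rewrite scale1r.
  by rewrite /eval_monom /= signzE (smulC ha hh).
- by rewrite scale0r smulA smul_odd_sqr -?odd_a ?smul0l.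
- case: ifP => _; first by rewrite scale1r.
  rewrite /eval_monom /= intrM -scalerA -smulZr.
  have := IHt c (eval_atom_homog c); rewrite /eval_monom => ->.
  by rewrite signzE (smulCA _ ha hh).
Qed.

Lemma eval_monom_sort a l :
  let r := monom_sort par a l in r.1%:~R *: eval_monom r.2 = eval_prod a l.
Proof.
elim: l a => [|b l IHl] a /=; first by rewrite scale1r.
by rewrite intrM -scalerA eval_atom_insert -[eval_prod b l]IHl smulZr.
Qed.

Lemma eval_prod_der2 a l : (forall x, delta (delta x) = 0) ->
  has (fun b => (2 <= b.2)%N) (a :: l) -> eval_prod a l = 0.
Proof.
move=> delta2; have eval_der2 (b : atom) : (2 <= b.2)%N -> eval_atom b = 0.
  by case: b => i [|[|k]] //= _; apply: delta2.
elim: l a => [|b l IHl] a /=; first by rewrite orbF; apply: eval_der2.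
by case/orP => [/eval_der2 ->|/IHl ->]; rewrite ?smul0l ?smul0r.
Qed.

Lemma eval_spoly_sort (nil2 : bool) : (nil2 -> forall x, delta (delta x) = 0) ->
  forall p, eval_spoly (spoly_sort par nil2 p) = eval_spoly p.
Proof.
move=> delta2; elim=> [|[c [a l]] p IHp] //=.
have := eval_monom_sort a l; rewrite /eval_monom /= => sortE.
case: ifP => [/orP[/eqP r0|/andP[n2 der2]]|_] /=.
- by rewrite IHp -sortE r0 scale0r scaler0 add0r.
- by rewrite IHp -sortE /eval_monom (eval_prod_der2 (delta2 n2) der2) !scaler0 add0r.
- by rewrite IHp -sortE intrM -scalerA.
Qed.

End SortSoundness.

Lemma eval_spoly_add_term cm p :
  eval_spoly (spoly_add_term cm p) = cm.1%:~R *: eval_monom cm.2 + eval_spoly p.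
Proof.
elim: p => [|d p IHp] //=; case: ifP => [/eqP ->|_] /=.
  by rewrite intrD scalerDl addrA.
by rewrite IHp addrCA.
Qed.

Lemma eval_spoly_collect p : eval_spoly (spoly_collect p) = eval_spoly p.
Proof. by elim: p => [|cm p IHp] //=; rewrite eval_spoly_add_term IHp. Qed.

Lemma eval_spoly_coef0 p : all (fun cm => cm.1 == 0) p -> eval_spoly p = 0.
Proof. by elim: p => [|cm p IHp] //= /andP[/eqP -> /IHp ->]; rewrite scale0r add0r. Qed.

Lemma sterm_eqbP (nil2 : bool) t1 t2 :
  (nil2 -> forall x, delta (delta x) = 0) -> (2%:R : K) != 0 ->
  sterm_eqb par nil2 t1 t2 -> eval_sterm t1 = eval_sterm t2.
Proof.
move=> delta2 two_neq0 /eval_spoly_coef0.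
rewrite eval_spoly_collect eval_spoly_sort // eval_spoly_cat eval_spoly_scale.
by rewrite !eval_spoly_of scaleN1r => /subr0_eq.
Qed.

End Soundness.

Lemma homog0 (K : fieldType) (A : lmodType K) (pi : bool -> A -> A) b :
  grading pi -> homog pi b 0.
Proof. by case=> pi_lin _ _; apply: linear_fun0 (pi_lin b). Qed.

Fixpoint homog_env (K : fieldType) (A : lmodType K) (pi : bool -> A -> A)
    (env : seq A) (par : seq bool) : Prop :=
  match env, par with
  | x :: env', b :: par' => homog pi b x /\ homog_env pi env' par'
  | [::], [::] => True
  | _, _ => False
  end.

Lemma homog_env_nth (K : fieldType) (A : lmodType K) (pi : bool -> A -> A)
    env par : grading pi -> homog_env pi env par ->
  forall i, homog pi (nth false par i) (nth 0 env i).
Proof.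
move=> grad_pi; elim: env par => [|x env IHenv] [|b par] //=.
  by move=> _ i; rewrite !nth_nil; apply: homog0.
by case=> hx /IHenv henv [|i] /=.
Qed.

Ltac seq_mem t l :=
  lazymatch l with
  | nil => constr:(false)
  | t :: _ => constr:(true)
  | _ :: ?l' => seq_mem t l'
  end.

Ltac seq_index t l :=
  lazymatch l with
  | t :: _ => constr:(O)
  | _ :: ?l' => let n := seq_index t l' in constr:(S n)
  end.

Ltac sterm_vars mul delta t env :=
  lazymatch t with
  | @GRing.add _ ?u ?v =>
      let env := sterm_vars mul delta u env in sterm_vars mul delta v env
  | @GRing.opp _ ?u => sterm_vars mul delta u env
  | @GRing.scale _ _ _ ?u => sterm_vars mul delta u env
  | mul ?u ?v => let env := sterm_vars mul delta u env in sterm_vars mul delta v env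
  | delta ?u => sterm_vars mul delta u env
  | _ => lazymatch seq_mem t env with
         | true => env
         | false => constr:(t :: env)
         end
  end.

Ltac reify_sterm mul delta env t :=
  lazymatch t with
  | @GRing.add _ ?u ?v =>
      let a := reify_sterm mul delta env u in
      let b := reify_sterm mul delta env v in constr:(SAdd a b)
  | @GRing.opp _ ?u => let a := reify_sterm mul delta env u in constr:(SOpp a)
  | @GRing.scale _ _ (@GRing.natmul _ _ ?n) ?u =>
      let a := reify_sterm mul delta env u in constr:(SScale (Posz n) a)
  | mul ?u ?v =>
      let a := reify_sterm mul delta env u in
      let b := reify_sterm mul delta env v in constr:(SMul a b)
  | delta ?u => let a := reify_sterm mul delta env u in constr:(SDer a)
  | _ => let i := seq_index t env in constr:(SVar i)
  end.

Ltac env_parities pi env :=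
  lazymatch env with
  | nil => constr:(@nil bool)
  | ?x :: ?env' =>
      let b := lazymatch goal with _ : homog pi ?b x |- _ => b end in
      let par := env_parities pi env' in constr:(b :: par)
  end.

(* Solves [L = R] for L, R built with [+], [-], [n%:R *:], [mul] and [delta]
   from variables that all have a [homog] hypothesis; needs [2%:R != 0] in the
   context, and uses [delta^2 = 0] if that is assumed as well. *)
Ltac super_ring :=
  lazymatch goal with
  | superA : comm_assoc_superalgebra ?pi ?mul,
    delta_der : odd_derivation _ _ ?delta |- ?L = ?R =>
      let T := type of L in
      let env := sterm_vars mul delta L (@nil T) in
      let env := sterm_vars mul delta R env in
      let par := env_parities pi env in
      let tl := reify_sterm mul delta env L in
      let tr := reify_sterm mul delta env R in
      let henv := fresh "henv" in
      let delta2 := fresh "delta2" in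
      (have henv : homog_env pi env par by do ?split);
      first [ have delta2 : true -> forall x, delta (delta x) = 0
                by move=> _; assumption
            | have delta2 : false -> forall x, delta (delta x) = 0 by [] ];
      change (eval_sterm mul delta env tl = eval_sterm mul delta env tr);
      apply: (sterm_eqbP superA delta_der (homog_env_nth (proj1 superA) henv) delta2);
      [assumption | vm_compute; reflexivity]
  end.

Section DeltaBracket.

Variables (K : fieldType) (A : lmodType K).
Variables (pi : bool -> A -> A) (mul : A -> A -> A) (delta : A -> A).
Hypothesis superA : comm_assoc_superalgebra pi mul.
Hypothesis delta_der : odd_derivation pi mul delta.
Hypothesis two_neq0 : (2%:R : K) != 0.

Local Notation brk := (br mul delta).
Local Notation dmul := (pmul mul delta).

Lemma br_oddC x y : brk true true x y = brk true true y x.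
Proof. by rewrite /br /= !scale1r addrC. Qed.

Lemma br_odd_evenC x y : brk true false x y = brk false true y x.
Proof. by rewrite /br /= !scale1r addrC. Qed.

Lemma br_odd_jordan x y : homog pi true x -> homog pi true y ->
  brk true true (brk true true x x) (brk true true y x) =
  brk true true (brk true true (brk true true x x) y) x.
Proof. by move=> hx hy; rewrite /br /sgn /= !scale1r; super_ring. Qed.

Lemma pmulC X Y : dmul X Y = dmul Y X.
Proof. by rewrite /pmul br_oddC [in RHS]addrC !br_odd_evenC. Qed.

Lemma pmul_jordan X Y : (forall x, delta (delta x) = 0) ->
  homog pi true X.1 -> homog pi false X.2 ->
  homog pi true Y.1 -> homog pi false Y.2 ->
  dmul (dmul X X) (dmul Y X) = dmul (dmul (dmul X X) Y) X.
Proof.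
case: X Y => [x0 x1] [y0 y1] delta2 /= hx0 hx1 hy0 hy1.
rewrite /pmul /br /sgn /= !scale1r.
by congr (_, _); super_ring.
Qed.

Lemma br_smul_dist bz b c z x y :
  homog pi bz z -> homog pi b x -> homog pi c y ->
  2%:R *: mul z (brk b c x y) =
  brk (bz (+) b) c (mul z x) y + sgn K (bz && ~~ b) *: brk b (bz (+) c) x (mul z y).
Proof.
by case: bz b c => [] [] [] hz hx hy; rewrite /br /sgn /= ?scale1r ?scaleN1r;
  super_ring.
Qed.

End DeltaBracket.

Lemma theorem5_for_char_neq2 (K : fieldType) : (2%:R : K) != 0 -> theorem5_for K.
Proof.
move=> two_neq0 A pi mul delta superA delta_der D brk; rewrite {}/D {}/brk.
split; [|split].
- move=> x y hx hy; split; congr (Dop _ _ _); first exact: br_oddC.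
  exact: br_odd_jordan superA delta_der two_neq0 x y hx hy.
- move=> delta2; split=> [x y _ _|X Y hX1 hX2 hY1 hY2].
    by rewrite br_odd_evenC.
  by rewrite /Deq pmulC (pmul_jordan superA delta_der two_neq0).
- move=> bz b c z x y hz hx hy; congr (Dop _ _ _).
  exact: br_smul_dist superA delta_der two_neq0 bz b c z x y hz hx hy.
Qed.

Theorem theorem5 : theorem5_for Rdefinitions.R /\ theorem5_for (Rdefinitions.R)[i].
Proof. by split; apply: theorem5_for_char_neq2; rewrite pnatr_eq0. Qed.
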